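(* Let $\underline{T}=(T_1,\ldots,T_n)$ be a spherical unitary on a Hilbert space $\mathcal{H}$, i.e. $T_iT_j=T_jT_i$ for all $i,j$, each $T_i$ is normal, and $\sum_{i=1}^nT_iT_i^*=I$. Let $\tilde{\underline{V}}$ on $\tilde{\mathcal{H}}\supseteq\mathcal{H}$ be the minimal isometric dilation of $\underline{T}$. Then the maximal commuting piece of $\tilde{\underline{V}}$ is $\underline{T}$, i.e. $\tilde{\mathcal{H}}^c(\tilde{\underline{V}})=\mathcal{H}$ and $\tilde V_i^c=T_i$ for all $i$.
   Context: Notation: $\Lambda=\{1,\ldots,n\}$, $\tilde\Lambda=\bigcup_{m\ge0}\Lambda^m$; $\underline{R}^\alpha=R_{\alpha_1}\cdots R_{\alpha_m}$, $\underline{R}^0=I$. The minimal isometric dilation of a contractive tuple $\underline{T}$ on $\mathcal{H}$ is a tuple $\tilde{\underline{V}}$ of isometries with mutually orthogonal ranges on $\tilde{\mathcal{H}}\supseteq\mathcal{H}$ with $\tilde V_i^*h=T_i^*h$ for $h\in\mathcal{H}$ and $\overline{\mathrm{span}}\{\tilde{\underline{V}}^\alpha h:h\in\mathcal{H},\alpha\in\tilde\Lambda\}=\tilde{\mathcal{H}}$ (unique up to unitary equivalence fixing $\mathcal{H}$). Maximal commuting piece of a tuple $\underline{R}$ on $\mathcal{L}$: the largest closed subspace $\mathcal{L}^c(\underline{R})$ invariant under all $R_i^*$ on which $R_i^*R_j^*h=R_j^*R_i^*h$ for all $i,j$; $R_i^c=P_{\mathcal{L}^c(\underline{R})}R_i|_{\mathcal{L}^c(\underline{R})}$.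 *)

From HB Require Import structures.
From mathcomp Require Import all_boot all_order all_algebra.
From mathcomp Require Import reals.
From mathcomp Require Export complex.
Set Implicit Arguments.
Unset Strict Implicit.
Unset Printing Implicit Defensive.
Import Order.TTheory GRing.Theory Num.Theory.
Local Open Scope ring_scope.

Section Hilbert.
Variable R : realType.
Local Notation C := R[i].

(* ip is linear in the first and conjugate-linear in the second arg.   *)
Section Space.
Variable H : lmodType C.
Variable ip : H -> H -> C.

Definition is_inner_product : Prop :=
  [/\ (forall (a : C) (x y z : H), ip (a *: x + y) z = a * ip x z + ip y z),
      (forall x y : H, ip x y = ((ip y x)^*)%C),
      (forall x : H, 0 <= ip x x) &
      (forall x : H, ip x x = 0 -> x = 0)].

Definition nsq (x : H) : R := complex.Re (ip x x).

Definition converges_to (u : nat -> H) (x : H) : Prop :=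
  forall e : R, 0 < e -> exists N : nat, forall m : nat, (N <= m)%N ->
    nsq (u m - x) < e.

Definition cauchy_seq (u : nat -> H) : Prop :=
  forall e : R, 0 < e -> exists N : nat, forall m k : nat,
    (N <= m)%N -> (N <= k)%N -> nsq (u m - u k) < e.

Definition is_hilbert : Prop :=
  is_inner_product /\
  forall u : nat -> H, cauchy_seq u -> exists x : H, converges_to u x.

(* A map on a
   Hilbert space admits an adjoint iff it is a bounded linear operator
   (Hellinger--Toeplitz), so "T with adjoint Tadj" = "bounded operator T". *)
Definition is_adjoint (T S : H -> H) : Prop :=
  forall x y : H, ip (T x) y = ip x (S y).

Definition closed_subspace (M : H -> Prop) : Prop :=
  [/\ M 0,
      (forall (a : C) (x y : H), M x -> M y -> M (a *: x + y)) &
      (forall (u : nat -> H) (x : H), (forall k, M (u k)) ->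
          converges_to u x -> M x)].

Definition is_orth_proj (M : H -> Prop) (x y : H) : Prop :=
  M y /\ forall z : H, M z -> ip (x - y) z = 0.

Variable n : nat.

Definition commuting_piece_cand (Radj : 'I_n -> H -> H) (M : H -> Prop) :=
  [/\ closed_subspace M,
      (forall i x, M x -> M (Radj i x)) &
      (forall i j x, M x -> Radj i (Radj j x) = Radj j (Radj i x))].

Definition is_max_commuting_space (Radj : 'I_n -> H -> H) (M : H -> Prop) :=
  commuting_piece_cand Radj M /\
  forall M' : H -> Prop, commuting_piece_cand Radj M' ->
    forall x, M' x -> M x.

Fixpoint word_op (Rop : 'I_n -> H -> H) (alpha : seq 'I_n) : H -> H :=
  match alpha with
  | [::] => id
  | i :: s => fun x => Rop i (word_op Rop s x)
  end.

End Space.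

Definition spherical_unitary (H : lmodType C) (n : nat)
    (T Tadj : 'I_n -> H -> H) : Prop :=
  [/\ (forall i j x, T i (T j x) = T j (T i x)),
      (forall i x, T i (Tadj i x) = Tadj i (T i x)) &
      (forall x, \sum_(i < n) T i (Tadj i x) = x)].

(* Minimal isometric dilation.  The big space K contains H via the     *)
(* isometric linear embedding J (H is identified with range J).        *)
Definition is_min_isometric_dilation (H K : lmodType C)
    (ipH : H -> H -> C) (ipK : K -> K -> C) (n : nat)
    (Tadj : 'I_n -> H -> H) (J : H -> K) (V Vadj : 'I_n -> K -> K) : Prop :=
  [/\
      (forall (a : C) (x y : H), J (a *: x + y) = a *: J x + J y),
      (forall x y : H, ipK (J x) (J y) = ipH x y),
      (forall i (x y : K), ipK (V i x) (V i y) = ipK x y) &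
      (forall i j (x y : K), i != j -> ipK (V i x) (V j y) = 0)] /\
  (forall i (h : H), Vadj i (J h) = J (Tadj i h)) /\
      (* minimality: the closed span of V^alpha h is all of K *)
      (forall z : K, exists u : nat -> K,
          converges_to ipK u z /\
          forall k, exists (m : nat) (c : 'I_m -> C)
                           (w : 'I_m -> seq 'I_n) (h : 'I_m -> H),
            u k = \sum_(l < m) c l *: word_op V (w l) (J (h l))).

End Hilbert.

(* Write D_i h = V_i h - T_i h (the defect) for h in H, identified with its image in
   K.  That H is a commuting piece of V is immediate from V_i^* h = T_i^* h; the point
   is maximality.  Two facts about the spherical unitary T drive the argument:
   h = sum_j V_j T_j^* h (V is a row co-isometry on H), and T_i commutes with every
   T_j^* (Fuglede).  With them, the wandering vectors R_0 = D_i h and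
   R_(k+1) = sum_j V_j R_k (T_j^* h) are pairwise orthogonal, of equal norm, and
   have the same inner product with every z in a commuting piece M.  Pairing z with
   R_0 + ... + R_(N-1) then gives N |<z, D_i h>| <= sqrt N ||z|| ||D_i h||, so z is
   orthogonal to every D_i h and, inductively, <z, V^a h> = <z, T^a h>.  As the
   V^a h span K, the compressions to H of approximants of z converge to z, and H is
   closed, so M is contained in H. *)
From HB Require Import structures.
From mathcomp Require Import all_boot all_order all_algebra.
From mathcomp Require Import reals complex ring lra.
From Stdlib Require Import IndefiniteDescription.
Set Implicit Arguments.
Unset Strict Implicit.
Unset Printing Implicit Defensive.
Import Order.TTheory GRing.Theory Num.Theory.
Local Open Scope ring_scope.

Lemma quadratic_family_ge0_eq0 (R : realType) (a b s : R) : 0 <= b ->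
  (forall (N : nat) (t : R), 0 <= N%:R * a - 2 * t * N%:R * b + t ^+ 2 * s) ->
  b = 0.
Proof.
move=> b_ge0 q_ge0; apply/eqP; rewrite eq_le b_ge0 andbT leNgt; apply/negP => b_gt0.
(* At t = (a + 1) / 2b the family reads 0 <= t^2 s - N for every N. *)
pose t := (a + 1) / (2 * b).
have t2b : t * (2 * b) = a + 1 by rewrite divfK // mulf_neq0 // gt_eqF.
have s_ge0 : 0 <= t ^+ 2 * s by have := q_ge0 0%N t; lra.
have := q_ge0 (Num.Def.archi_bound (t ^+ 2 * s)) t.
have := archi_boundP s_ge0; set N := (Num.Def.archi_bound _)%:R => lt_N.
have -> : N * a - 2 * t * N * b = N * a - N * (t * (2 * b)) by ring.
by rewrite t2b; lra.
Qed.

Section InnerProduct.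
Variables (R : realType) (H : lmodType R[i]) (ip : H -> H -> R[i]).
Hypothesis ip_inner : is_inner_product ip.

Lemma ip0l z : ip 0 z = 0.
Proof.
case: ip_inner => lin _ _ _.
by apply: (@addrI _ (ip 0 z)); rewrite addr0 -{1}(mul1r (ip 0 z)) -lin scale1r addr0.
Qed.

Lemma ipDl x y z : ip (x + y) z = ip x z + ip y z.
Proof. by case: ip_inner => lin _ _ _; rewrite -{1}[x]scale1r lin mul1r. Qed.

Lemma ipZl a x z : ip (a *: x) z = a * ip x z.
Proof. by case: ip_inner => lin _ _ _; rewrite -[a *: x]addr0 lin ip0l addr0. Qed.

Lemma ipNl x z : ip (- x) z = - ip x z.
Proof. by rewrite -scaleN1r ipZl mulN1r. Qed.

Lemma ipBl x y z : ip (x - y) z = ip x z - ip y z.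
Proof. by rewrite ipDl ipNl. Qed.

Lemma ip_conj x y : ip x y = (ip y x)^*%C.
Proof. by case: ip_inner. Qed.

Lemma ipDr x y z : ip z (x + y) = ip z x + ip z y.
Proof. by rewrite ip_conj ipDl rmorphD /= -!ip_conj. Qed.

Lemma ipZr a x z : ip z (a *: x) = a^*%C * ip z x.
Proof. by rewrite ip_conj ipZl rmorphM /= -ip_conj. Qed.

Lemma ip0r z : ip z 0 = 0.
Proof. by rewrite ip_conj ip0l conjc0. Qed.

Lemma ipBr x y z : ip z (x - y) = ip z x - ip z y.
Proof. by rewrite ip_conj ipBl rmorphB /= -!ip_conj. Qed.

Lemma ip_suml m (f : 'I_m -> H) z :
  ip (\sum_(k < m) f k) z = \sum_(k < m) ip (f k) z.
Proof. by elim/big_rec2: _ => [|k a b _ <-]; rewrite ?ip0l ?ipDl. Qed.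

Lemma ip_sumr m (f : 'I_m -> H) z :
  ip z (\sum_(k < m) f k) = \sum_(k < m) ip z (f k).
Proof. by elim/big_rec2: _ => [|k a b _ <-]; rewrite ?ip0r ?ipDr. Qed.

Lemma ipxx_ge0 x : 0 <= ip x x.
Proof. by case: ip_inner. Qed.

Lemma ipxx_eq0 x : ip x x = 0 -> x = 0.
Proof. by case: ip_inner => _ _ _; apply. Qed.

Lemma conj_ipxx x : (ip x x)^*%C = ip x x.
Proof. by rewrite -ip_conj. Qed.

Lemma ip_injr u v : (forall w, ip w u = ip w v) -> u = v.
Proof.
move=> eq_uv; apply/eqP; rewrite -subr_eq0; apply/eqP/ipxx_eq0.
by rewrite ipBr eq_uv subrr.
Qed.

Lemma adjoint_ipr (A Aadj : H -> H) :
  is_adjoint ip A Aadj -> forall x y, ip x (A y) = ip (Aadj x) y.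
Proof. by move=> A_adj x y; rewrite ip_conj A_adj -ip_conj. Qed.

Lemma ip_sum_orthogonal m (f : 'I_m -> H) :
  (forall k l, k != l -> ip (f k) (f l) = 0) ->
  ip (\sum_(k < m) f k) (\sum_(k < m) f k) = \sum_(k < m) ip (f k) (f k).
Proof.
move=> orth; rewrite ip_suml; apply: eq_bigr => k _.
by rewrite ip_sumr (bigD1 k) //= big1 ?addr0 // => l; rewrite eq_sym; apply: orth.
Qed.

Lemma nsqE x : ip x x = (nsq ip x)%:C%C.
Proof. by rewrite RRe_real // ger0_real // ipxx_ge0. Qed.

Lemma nsq_ge0 x : 0 <= nsq ip x.
Proof. by rewrite -ler0c -nsqE ipxx_ge0. Qed.

Lemma nsq_eq0 x : nsq ip x = 0 -> x = 0.
Proof. by move=> x0; apply: ipxx_eq0; rewrite nsqE x0. Qed.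

Lemma nsqC x y : nsq ip (x - y) = nsq ip (y - x).
Proof. by rewrite /nsq -opprB ipNl ip_conj ipNl rmorphN opprK /= -ip_conj. Qed.

Lemma nsqB_le x y z : nsq ip (x - z) <= 2 * nsq ip (x - y) + 2 * nsq ip (y - z).
Proof.
have parallelogram (a b : H) :
    nsq ip (a + b) + nsq ip (a - b) = 2 * nsq ip a + 2 * nsq ip b.
  apply: complexI; rewrite !rmorphD !rmorphM /= rmorph_nat -!nsqE.
  by rewrite !ipBl !ipBr !ipDl !ipDr; ring.
have := parallelogram (x - y) (y - z); have := nsq_ge0 (x - y - (y - z)).
by rewrite addrA subrK; lra.
Qed.

Lemma converges_to_cauchy u x : converges_to ip u x -> cauchy_seq ip u.
Proof.
move=> ux e e_gt0; have e4_gt0 : 0 < e / 4 by rewrite divr_gt0.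
have [N uxN] := ux _ e4_gt0.
exists N => m k Nm Nk; apply: le_lt_trans (nsqB_le _ x _) _.
by have := uxN m Nm; have := uxN k Nk; rewrite (nsqC x); lra.
Qed.

Lemma converges_to_unique u x y :
  converges_to ip u x -> converges_to ip u y -> x = y.
Proof.
move=> ux uy; apply/eqP; rewrite -subr_eq0; apply/eqP/nsq_eq0/eqP.
rewrite eq_le nsq_ge0 andbT leNgt; apply/negP => d_gt0.
have d4_gt0 : 0 < nsq ip (x - y) / 4 by rewrite divr_gt0.
have [N uxN] := ux _ d4_gt0; have [M uyM] := uy _ d4_gt0.
have := uxN _ (leq_maxl N M); have := uyM _ (leq_maxr N M).
by have := nsqB_le x (u (maxn N M)) y; rewrite (nsqC x (u _)); lra.
Qed.

Lemma nsqB_orthogonal x y : ip x y = 0 -> nsq ip (x - y) = nsq ip x + nsq ip y.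
Proof.
move=> xy0; have yx0 : ip y x = 0 by rewrite ip_conj xy0 conjc0.
by apply: complexI; rewrite rmorphD /= -!nsqE ipBl !ipBr xy0 yx0 subr0 sub0r opprK.
Qed.

Lemma nsqB_le_orthogonal x y z :
  ip (x - z) (y - z) = 0 -> nsq ip (x - z) <= nsq ip (x - y).
Proof.
move=> orth; have := nsqB_orthogonal orth; rewrite opprB addrA subrK => ->.
by rewrite lerDl nsq_ge0.
Qed.

(* 0 <= ||w N - t e^* z||^2 is a family as in quadratic_family_ge0_eq0, with b = |e|^2. *)
Lemma ip_eq0_of_linear_growth z (w : nat -> H) (e : R[i]) (c : R) :
  (forall N, ip z (w N) = N%:R * e) -> (forall N, ip (w N) (w N) = N%:R * c%:C%C) ->
  e = 0.
Proof.
move=> zw ww; pose p := e * e^*%C; pose z' := e^*%C *: z.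
pose b := complex.Re p.
have pE : p = b%:C%C by rewrite RRe_real // ger0_real // mulcJ_ge0.
have z'w N : ip z' (w N) = N%:R * p by rewrite ipZl zw mulrCA (mulrC e^*%C).
have wz' N : ip (w N) z' = N%:R * p.
  by rewrite ip_conj z'w rmorphM /= conjc_nat pE conjc_real.
have b_ge0 : 0 <= b by rewrite -ler0c -pE mulcJ_ge0.
suff b0 : b = 0.
  have /eqP : p = 0 by rewrite pE b0.
  by rewrite mulf_eq0 conjc_eq0 orbb => /eqP.
apply: (quadratic_family_ge0_eq0 (a := c) (s := nsq ip z')) => // N t.
rewrite -ler0c (_ : _%:C%C = ip (w N - t%:C%C *: z') (w N - t%:C%C *: z')) ?ipxx_ge0 //.
rewrite ipBl !ipBr !(ipZl _ z') !(ipZr _ z') conjc_real z'w wz' ww nsqE pE.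
by rewrite !(rmorphD, rmorphB, rmorphM, rmorphXn, rmorph_nat) /=; ring.
Qed.

End InnerProduct.

Section IsometricEmbedding.
Variables (R : realType) (H K : lmodType R[i]).
Variables (ipH : H -> H -> R[i]) (ipK : K -> K -> R[i]) (J : H -> K).
Hypothesis K_inner : is_inner_product ipK.
Hypothesis J_linear : forall a x y, J (a *: x + y) = a *: J x + J y.
Hypothesis J_isometric : forall x y, ipK (J x) (J y) = ipH x y.

Lemma J0 : J 0 = 0.
Proof.
by apply: (@addrI _ (J 0)); rewrite addr0 -{1}[J 0]scale1r -J_linear scale1r addr0.
Qed.

Lemma JD x y : J (x + y) = J x + J y.
Proof. by rewrite -{1}[x]scale1r J_linear scale1r. Qed.

Lemma JZ a x : J (a *: x) = a *: J x.
Proof. by rewrite -[a *: x]addr0 J_linear J0 addr0. Qed.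

Lemma JB x y : J (x - y) = J x - J y.
Proof. by rewrite JD -scaleN1r JZ scaleN1r. Qed.

Lemma J_sum m (f : 'I_m -> H) : J (\sum_(k < m) f k) = \sum_(k < m) J (f k).
Proof. by elim/big_rec2: _ => [|k a b _ <-]; rewrite ?J0 ?JD. Qed.

Lemma nsqJ x : nsq ipK (J x) = nsq ipH x.
Proof. by rewrite /nsq J_isometric. Qed.

Lemma converges_toJ y h : converges_to ipH y h -> converges_to ipK (J \o y) (J h).
Proof. by move=> yh e /yh [N yhN]; exists N => m /yhN; rewrite /= -JB nsqJ. Qed.

Lemma cauchy_seqJ y : cauchy_seq ipK (J \o y) -> cauchy_seq ipH y.
Proof. by move=> Jy e /Jy [N JyN]; exists N => m k /JyN Nk /Nk; rewrite /= -JB nsqJ. Qed.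

Lemma limit_in_range (y : nat -> H) z :
  is_hilbert ipH -> converges_to ipK (J \o y) z -> exists h, z = J h.
Proof.
move=> [_ H_complete] Jyz.
have [h yh] := H_complete y (cauchy_seqJ (converges_to_cauchy K_inner Jyz)).
by exists h; apply: (converges_to_unique K_inner Jyz); apply: converges_toJ yh.
Qed.

Lemma closed_subspace_range :
  is_hilbert ipH -> closed_subspace ipK (fun z => exists h, z = J h).
Proof.
move=> H_hilbert; split; first by exists 0; rewrite J0.
  by move=> a _ _ [x ->] [y ->]; exists (a *: x + y); rewrite J_linear.
move=> u z u_range uz; have [y uJy] := functional_choice _ u_range.
apply: (@limit_in_range y _ H_hilbert) => e /uz [N uzN].
by exists N => m /uzN; rewrite uJy.
Qed.

End IsometricEmbedding.

Section SphericalUnitary.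
Variables (R : realType) (n : nat) (H : lmodType R[i]) (ip : H -> H -> R[i]).
Variables T Tadj : 'I_n -> H -> H.
Hypothesis ip_inner : is_inner_product ip.
Hypothesis T_adjoint : forall i, is_adjoint ip (T i) (Tadj i).
Hypothesis T_spherical : spherical_unitary T Tadj.

Let T_adjoint_ipr i := adjoint_ipr ip_inner (T_adjoint i).

Lemma adjoint_comm i j x : Tadj i (Tadj j x) = Tadj j (Tadj i x).
Proof.
case: T_spherical => T_comm _ _.
by apply: (ip_injr ip_inner) => w; rewrite -!T_adjoint T_comm.
Qed.

Lemma sum_ip_adjoint x y : \sum_(j < n) ip (Tadj j x) (Tadj j y) = ip x y.
Proof.
case: T_spherical => _ _ T_sum.
by rewrite -{2}(T_sum x) ip_suml //; apply: eq_bigr => j _; rewrite T_adjoint.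
Qed.

(* Fuglede: expanding sum_k ||T_k^* T_i x - T_i T_k^* x||^2, each of the four sums
   equals ||T_i x||^2. *)
Lemma commute_adjoint i k x : T i (Tadj k x) = Tadj k (T i x).
Proof.
case: T_spherical => _ T_normal _.
pose a k := Tadj k (T i x); pose b k := T i (Tadj k x); pose A := ip (T i x) (T i x).
have aa : \sum_(k < n) ip (a k) (a k) = A by rewrite sum_ip_adjoint.
have bb : \sum_(k < n) ip (b k) (b k) = A.
  under eq_bigr => l _ do rewrite /b T_adjoint -T_normal T_adjoint_ipr adjoint_comm.
  by rewrite sum_ip_adjoint -T_adjoint_ipr T_normal -T_adjoint.
have ab : \sum_(k < n) ip (a k) (b k) = A.
  under eq_bigr => l _ do rewrite /a /b T_adjoint_ipr adjoint_comm.
  by rewrite sum_ip_adjoint -T_adjoint_ipr.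
have ba : \sum_(k < n) ip (b k) (a k) = A.
  under eq_bigr => l _ do rewrite ip_conj //.
  by rewrite -rmorph_sum /= ab conj_ipxx.
have : \sum_(k < n) ip (a k - b k) (a k - b k) = 0.
  under eq_bigr => l _ do rewrite ipBl // !ipBr //.
  by rewrite !sumrB aa bb ab ba !subrr.
move/psumr_eq0P => /(_ (fun l _ => ipxx_ge0 ip_inner _) k isT).
by move/(ipxx_eq0 ip_inner)/eqP; rewrite subr_eq0 => /eqP.
Qed.

End SphericalUnitary.

Section Dilation.
Variables (R : realType) (n : nat).
Variables (H : lmodType R[i]) (ipH : H -> H -> R[i]).
Variables (K : lmodType R[i]) (ipK : K -> K -> R[i]).
Variables (T Tadj : 'I_n -> H -> H) (J : H -> K) (V Vadj : 'I_n -> K -> K).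
Hypotheses (H_hilbert : is_hilbert ipH) (K_inner : is_inner_product ipK).
Hypothesis T_adjoint : forall i, is_adjoint ipH (T i) (Tadj i).
Hypothesis V_adjoint : forall i, is_adjoint ipK (V i) (Vadj i).
Hypothesis T_spherical : spherical_unitary T Tadj.
Hypothesis V_dilation : is_min_isometric_dilation ipH ipK Tadj J V Vadj.

Let H_inner : is_inner_product ipH. Proof. by case: H_hilbert. Qed.
Let J_linear a x y : J (a *: x + y) = a *: J x + J y.
Proof. by case: V_dilation => [[]]. Qed.
Let J_isometric x y : ipK (J x) (J y) = ipH x y.
Proof. by case: V_dilation => [[]]. Qed.
Let V_isometric j x y : ipK (V j x) (V j y) = ipK x y.
Proof. by case: V_dilation => [[]]. Qed.
Let V_orthogonal j k x y : j != k -> ipK (V j x) (V k y) = 0.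
Proof. by case: V_dilation => [[_ _ _ orth] _]; apply: orth. Qed.
Let V_dilates j h : Vadj j (J h) = J (Tadj j h).
Proof. by case: V_dilation => _ []. Qed.

Local Notation range := (fun z : K => exists h : H, z = J h).

Let V_adjoint_ipr j := adjoint_ipr K_inner (V_adjoint j).
Let T_adjoint_ipr j := adjoint_ipr H_inner (T_adjoint j).
Let T_sum_ip := sum_ip_adjoint H_inner T_adjoint T_spherical.
Let T_commute_adjoint := commute_adjoint H_inner T_adjoint T_spherical.

Lemma ip_V_sum j x (y : 'I_n -> K) :
  ipK (V j x) (\sum_(k < n) V k (y k)) = ipK x (y j).
Proof.
rewrite ip_sumr // (bigD1 j) //= V_isometric big1 ?addr0 // => k.
by rewrite eq_sym; apply: V_orthogonal.
Qed.

(* The right-hand side s satisfies ||s||^2 = <s, h> = ||h||^2, hence s = h. *)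
Lemma row_coisometry h : J h = \sum_(j < n) V j (J (Tadj j h)).
Proof.
set s := \sum_(j < n) _.
have ss : ipK s s = ipH h h.
  rewrite ip_suml // -T_sum_ip.
  by apply: eq_bigr => j _; rewrite ip_V_sum J_isometric.
have sh : ipK s (J h) = ipH h h.
  rewrite ip_suml // -T_sum_ip.
  by apply: eq_bigr => j _; rewrite V_adjoint V_dilates J_isometric.
have hs : ipK (J h) s = ipH h h by rewrite ip_conj // sh conj_ipxx.
apply/eqP; rewrite eq_sym -subr_eq0; apply/eqP/(ipxx_eq0 K_inner).
by rewrite ipBl // !ipBr // ss sh hs J_isometric !subrr.
Qed.

Lemma ip_word_range al h g :
  ipK (word_op V al (J h)) (J g) = ipK (J (word_op T al h)) (J g).
Proof.
elim: al g => [|j al IH] g //=.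
by rewrite V_adjoint V_dilates IH !J_isometric -T_adjoint.
Qed.

Section Wandering.
Variable i : 'I_n.

Definition defect (h : H) : K := V i (J h) - J (T i h).

Fixpoint wandering (k : nat) (h : H) : K :=
  if k is k'.+1 then \sum_(j < n) V j (wandering k' (Tadj j h)) else defect h.

Lemma ip_range_wandering k u g : ipK (J u) (wandering k g) = 0.
Proof.
elim: k u g => [|k IH] u g /=.
  by rewrite ipBr // V_adjoint_ipr V_dilates !J_isometric T_adjoint_ipr ?subrr.
by rewrite ip_sumr // big1 // => j _; rewrite V_adjoint_ipr V_dilates IH.
Qed.

Lemma ip_defect_wandering k h g : ipK (defect h) (wandering k.+1 g) = 0.
Proof.
rewrite /= ip_sumr // big1 // => j _.
rewrite ipBl // [X in _ - X]V_adjoint_ipr V_dilates ip_range_wandering subr0.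
by have [<-|ij] := eqVneq i j; rewrite ?V_isometric ?ip_range_wandering ?V_orthogonal.
Qed.

Lemma ip_wandering_succ k l h g : ipK (wandering k.+1 h) (wandering l.+1 g) =
  \sum_(j < n) ipK (wandering k (Tadj j h)) (wandering l (Tadj j g)).
Proof. by rewrite /= ip_suml //; apply: eq_bigr => j _; rewrite ip_V_sum. Qed.

Lemma wandering_orthogonal k l h g :
  k != l -> ipK (wandering k h) (wandering l g) = 0.
Proof.
elim: k l h g => [|k IH] [|l] h g // kl.
- exact: ip_defect_wandering.
- by rewrite ip_conj // ip_defect_wandering conjc0.
- by rewrite ip_wandering_succ big1 // => j _; apply: IH.
Qed.

Lemma ip_wandering_diag k h :
  ipK (wandering k h) (wandering k h) = ipH h h - ipH (T i h) (T i h).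
Proof.
elim: k h => [|k IH] h.
  have TV : ipK (J (T i h)) (V i (J h)) = ipH (T i h) (T i h).
    by rewrite V_adjoint_ipr V_dilates J_isometric -T_adjoint_ipr.
  rewrite /= ipBl // !ipBr // V_isometric !J_isometric TV (ip_conj K_inner (V i _)) TV.
  by rewrite conj_ipxx // subrr subr0.
rewrite ip_wandering_succ; under eq_bigr => j _ do rewrite IH.
rewrite sumrB !T_sum_ip; congr (_ - _).
by rewrite -T_sum_ip; apply: eq_bigr => j _; rewrite T_commute_adjoint.
Qed.

End Wandering.

Section CommutingPiece.
Variable M : K -> Prop.
Hypothesis M_piece : commuting_piece_cand ipK Vadj M.

Let M_invariant j z : M z -> M (Vadj j z).
Proof. by case: M_piece => _ invariant _; apply: invariant. Qed.
Let M_commute j k z : M z -> Vadj j (Vadj k z) = Vadj k (Vadj j z).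
Proof. by case: M_piece => _ _ comm; apply: comm. Qed.

Lemma ip_piece_defect_shift i z h : M z ->
  \sum_(j < n) ipK (Vadj j z) (defect i (Tadj j h)) = ipK z (defect i h).
Proof.
move=> Mz; rewrite /defect; under eq_bigr => j _ do rewrite ipBr //.
rewrite sumrB ipBr //; congr (_ - _).
  under eq_bigr => j _ do rewrite V_adjoint_ipr M_commute // -V_adjoint_ipr.
  by rewrite -ip_sumr // -row_coisometry V_adjoint_ipr.
under eq_bigr => j _ do rewrite T_commute_adjoint -V_adjoint_ipr.
by rewrite -ip_sumr // -row_coisometry.
Qed.

Lemma ip_piece_wandering i k z h :
  M z -> ipK z (wandering i k h) = ipK z (defect i h).
Proof.
elim: k z h => [|k IH] z h Mz //=.
rewrite ip_sumr // -ip_piece_defect_shift //; apply: eq_bigr => j _.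
by rewrite V_adjoint_ipr IH //; apply: M_invariant.
Qed.

(* w N = R_0 + ... + R_(N-1) has <z, w N> = N <z, D_i h> but ||w N||^2 = N ||D_i h||^2. *)
Lemma piece_orthogonal_defect i z h : M z -> ipK z (defect i h) = 0.
Proof.
move=> Mz; pose w N := \sum_(k < N) wandering i k h.
apply: (ip_eq0_of_linear_growth K_inner (z := z) (w := w) (c := nsq ipK (defect i h)))
  => N.
  rewrite /w ip_sumr //; under eq_bigr => k _ do rewrite ip_piece_wandering //.
  by rewrite sumr_const card_ord mulr_natl.
rewrite /w ip_sum_orthogonal //; last by move=> k l kl; apply: wandering_orthogonal.
under eq_bigr => k _ do rewrite ip_wandering_diag -(ip_wandering_diag i 0) /= nsqE //.
by rewrite sumr_const card_ord mulr_natl.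
Qed.

Lemma ip_piece_word z al h : M z ->
  ipK z (word_op V al (J h)) = ipK z (J (word_op T al h)).
Proof.
elim: al z h => [|j al IH] z h Mz //=.
rewrite V_adjoint_ipr IH; last exact: M_invariant.
rewrite -V_adjoint_ipr.
by apply/eqP; rewrite -subr_eq0 -ipBr // piece_orthogonal_defect.
Qed.

Lemma ip_piece_span z m (c : 'I_m -> R[i]) (w : 'I_m -> seq 'I_n) (h : 'I_m -> H) :
  let u := \sum_(l < m) c l *: word_op V (w l) (J (h l)) in
  let y := \sum_(l < m) c l *: word_op T (w l) (h l) in
  M z -> ipK z u = ipK z (J y) /\ forall g, ipK u (J g) = ipK (J y) (J g).
Proof.
move=> u y Mz; rewrite /u /y (J_sum J_linear); split.
  rewrite !ip_sumr //; apply: eq_bigr => l _.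
  by rewrite (JZ J_linear) !ipZr // ip_piece_word.
move=> g; rewrite !ip_suml //; apply: eq_bigr => l _.
by rewrite (JZ J_linear) !ipZl // ip_word_range.
Qed.

(* With J y_k the compression to H of the approximant u k of z, z - J y_k is orthogonal
   to u k - J y_k, so ||z - J y_k|| <= ||z - u k||. *)
Lemma piece_sub_range z : M z -> range z.
Proof.
move=> Mz; have [_ [_ /(_ z) [u [uz u_span]]]] := V_dilation.
have compress k : exists y, ipK z (u k) = ipK z (J y) /\
    forall g, ipK (u k) (J g) = ipK (J y) (J g).
  have [m [c [w [h ->]]]] := u_span k.
  by eexists; apply: ip_piece_span.
have [y uy] := functional_choice _ compress.
apply: (limit_in_range K_inner J_linear J_isometric (y := y) H_hilbert).
move=> e /uz [N uzN].
exists N => k /uzN uzk; apply: le_lt_trans uzk; rewrite /= !(nsqC K_inner _ z).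
apply: (nsqB_le_orthogonal K_inner); have [zu uJ] := uy k.
by rewrite ipBl // !ipBr // zu (ip_conj K_inner (J _) (u k)) uJ conj_ipxx // !subrr.
Qed.

End CommutingPiece.

Lemma range_commuting_piece : commuting_piece_cand ipK Vadj range.
Proof.
split; first exact: closed_subspace_range K_inner J_linear J_isometric H_hilbert.
  by move=> j _ [h ->]; exists (Tadj j h); rewrite V_dilates.
by move=> j k _ [h ->]; rewrite !V_dilates (adjoint_comm H_inner T_adjoint T_spherical).
Qed.

Lemma range_max_commuting_space : is_max_commuting_space ipK Vadj range.
Proof. by split; [exact: range_commuting_piece | move=> M; apply: piece_sub_range]. Qed.

Lemma range_orth_proj i h : is_orth_proj ipK range (V i (J h)) (J (T i h)).
Proof.
split=> [|_ [g ->]]; first by exists (T i h).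
by rewrite ipBl // V_adjoint V_dilates !J_isometric -T_adjoint subrr.
Qed.

End Dilation.

Theorem theorem15 (R : realType) (n : nat)
    (H : lmodType R[i]) (ipH : H -> H -> R[i])
    (K : lmodType R[i]) (ipK : K -> K -> R[i])
    (T Tadj : 'I_n -> H -> H) (J : H -> K) (V Vadj : 'I_n -> K -> K) :
  is_hilbert ipH -> is_hilbert ipK ->
  (forall i, is_adjoint ipH (T i) (Tadj i)) ->
  (forall i, is_adjoint ipK (V i) (Vadj i)) ->
  spherical_unitary T Tadj ->
  is_min_isometric_dilation ipH ipK Tadj J V Vadj ->
  is_max_commuting_space ipK Vadj (fun z : K => exists h : H, z = J h) /\
  (forall i (h : H),
     is_orth_proj ipK (fun z : K => exists h' : H, z = J h') (V i (J h))
                  (J (T i h))).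
Proof.
move=> H_hilbert [K_inner _] T_adjoint V_adjoint T_spherical V_dilation; split.
  exact: range_max_commuting_space H_hilbert K_inner T_adjoint V_adjoint T_spherical
    V_dilation.
exact: range_orth_proj K_inner T_adjoint V_adjoint V_dilation.
Qed.
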